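(* Let $\mathbb{S}\in\mathbb{Z}^{N_X\times N_e}$, $\mathcal{X}=\mathbb{R}^{N_X}_{>0}$, $\Phi$ a primal thermodynamic function on $\mathcal{X}$ with conjugate $\Phi^*$, and $\{\Psi^*_x\}_{x\in\mathcal{X}}$ a family of dissipation functions on $\mathbb{R}^{N_e}$ with conjugates $\Psi_x$. Let $j:\mathcal{X}\to\mathbb{R}^{N_e}$ be the flux of a generalized flow $\dot{x}=-\mathbb{S}j(x)$. For $x\in\mathcal{X}$ let $v(x):=-\mathbb{S}j(x)$, let $j^\dagger(x,v(x))$ be the unique minimizer of $\Psi_x$ over $\{j'\in\mathbb{R}^{N_e}:-\mathbb{S}j'=v(x)\}$, let $u_{eq}(x)\in\mathbb{R}^{N_X}$ be any vector with $-\mathbb{S}^Tu_{eq}(x)=\nabla\Psi_x(j^\dagger(x,v(x)))$ (i.e. a representative of $\partial\tilde{\Psi}_x[v(x)]$, with $\tilde{\Psi}_x(v):=\min_{-\mathbb{S}j'=v}\Psi_x(j')$), and define the effective equilibrium flux $j_{eq}(x):=\nabla\Psi^*_x(-\mathbb{S}^Tu_{eq}(x))$. Then $-\mathbb{S}j_{eq}(x)=-\mathbb{S}j(x)$ for all $x$, i.e. $j_{eq}$ induces the same velocity as $j$. Furthermore, for a trajectory $\{x_t\}$ of $\dot x=-\mathbb{S}j(x)$, define $$\tilde{x}_t:=\nabla\Phi^*\big(\nabla\Phi(x_t)+u_{eq}(x_t)\big),\qquad j_{eq}(t,x):=\nabla\Psi^*_x\Big(\mathbb{S}^T\nabla_x\mathcal{D}_\Phi[x\|\tilde{x}_t]\Big).$$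 Then the time-dependent equilibrium flux $j_{eq}(t,x)$ generates the same trajectory: $\dot{x}_t=-\mathbb{S}j_{eq}(t,x_t)$ for all $t$.
   Context: A primal thermodynamic function is a strictly convex differentiable $\Phi:\mathcal{X}\to\mathbb{R}$ such that $\{\nabla\Phi(x):x\in\mathcal{X}\}=\mathbb{R}^{N_X}$ and, for every $x_{in}\in\mathcal{X}$ and $x_{bd}\in\mathbb{R}^{N_X}_{\ge0}\setminus\mathcal{X}$, $\lim_{\lambda\to0^+}\frac{d}{d\lambda}\Phi(\lambda x_{in}+(1-\lambda)x_{bd})=-\infty$; $\Phi^*(y)=\max_{x\in\mathcal{X}}[\langle x,y\rangle-\Phi(x)]$, and $\nabla\Phi,\nabla\Phi^*$ are mutually inverse bijections between $\mathcal{X}$ and $\mathbb{R}^{N_X}$. The Bregman divergence is $\mathcal{D}_\Phi[x\|x']=\Phi(x)-\Phi(x')-\langle x-x',\nabla\Phi(x')\rangle$. A dissipation function on $\mathbb{R}^{N_e}$ is a strictly convex, continuously differentiable, $1$-coercive, even function $\psi$ with $\psi(0)=0$; $\Psi_x$ is the Legendre–Fenchel conjugate of $\Psi^*_x$, and $\nabla\Psi_x,\nabla\Psi^*_x$ are mutually inverse bijections. *)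

From HB Require Import structures.
From mathcomp Require Import all_boot all_order all_algebra.
From mathcomp Require Import all_classical all_reals all_analysis.
Set Implicit Arguments. Unset Strict Implicit. Unset Printing Implicit Defensive.
Import Order.TTheory GRing.Theory Num.Theory.
Import numFieldNormedType.Exports.
Local Open Scope classical_set_scope.
Local Open Scope ring_scope.

Section Defs.
Variable R : realType.

Definition dotv n (x y : 'cV[R]_n) : R := (x^T *m y) 0 0.

Definition grad n (f : 'cV[R]_n -> R) (x : 'cV[R]_n) : 'cV[R]_n :=
  \col_i ('d f x (delta_mx i 0)).

Definition posOrth n : set 'cV[R]_n := [set x | forall i, 0 < x i 0].
Definition nnegOrth n : set 'cV[R]_n := [set x | forall i, 0 <= x i 0].

Definition strictly_convex_on n (D : set 'cV[R]_n) (f : 'cV[R]_n -> R) :=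
  forall a b : 'cV[R]_n, D a -> D b -> a != b -> forall t : R, 0 < t < 1 ->
    f (t *: a + (1 - t) *: b) < t * f a + (1 - t) * f b.

Definition primal_thermo n (Phi : 'cV[R]_n -> R) :=
  [/\ strictly_convex_on (@posOrth n) Phi,
      (forall x, posOrth x -> differentiable Phi x),
      (forall y : 'cV[R]_n, exists2 x, posOrth x & grad Phi x = y) &
      (forall xin xbd, posOrth xin -> nnegOrth xbd -> ~ posOrth xbd ->
        derive1 (fun l : R => Phi (l *: xin + (1 - l) *: xbd)) l
          @[l --> 0^'+] --> -oo)].

Definition is_conj_on n (Phi Phis : 'cV[R]_n -> R) :=
  forall y, (forall x, posOrth x -> dotv x y - Phi x <= Phis y) /\
            (exists2 x, posOrth x & dotv x y - Phi x = Phis y).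

Definition dissipation m (psi : 'cV[R]_m -> R) :=
  [/\ strictly_convex_on setT psi,
      (forall f, differentiable psi f) /\ continuous (grad psi),
      (forall M : R, exists r : R, forall f, r <= `|f| -> M * `|f| <= psi f),
      (forall f, psi (- f) = psi f) &
      psi 0 = 0].

Definition LF_conj m (psis : 'cV[R]_m -> R) (j : 'cV[R]_m) : R :=
  sup (range (fun f => dotv j f - psis f)).

Definition bregman n (Phi : 'cV[R]_n -> R) (x x' : 'cV[R]_n) : R :=
  Phi x - Phi x' - dotv (x - x') (grad Phi x').

End Defs.

(** Both claims are pointwise identities.  Since [grad (Psis x)] inverts
    [grad (Psi x)], [jeq x = grad (Psis x) (grad (Psi x) (jdag x)) = jdag x],
    which induces the velocity of [j x] by construction of [jdag].  For the
    time-dependent flux, the gradient of a Bregman divergence in its first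
    argument is [grad Phi x - grad Phi x'], and [grad Phi (xtil t)] is
    [grad Phi (xt t) + ueq (xt t)]; hence [grad_x D_Phi[x || xtil t]] at
    [x = xt t] is [- ueq (xt t)], so [jeqt t (xt t) = jeq (xt t)]. *)

From HB Require Import structures.
From mathcomp Require Import all_boot all_order all_algebra.
From mathcomp Require Import all_classical all_reals all_analysis.
Set Implicit Arguments. Unset Strict Implicit. Unset Printing Implicit Defensive.
Import Order.TTheory GRing.Theory Num.Theory.
Import numFieldNormedType.Exports.
Local Open Scope classical_set_scope.
Local Open Scope ring_scope.

Section Gradient.
Variables (R : realType) (n : nat).
Implicit Types (f h : 'cV[R]_n -> R) (x g : 'cV[R]_n).

Definition dotvl g x := dotv x g.

Lemma dotvl_linear g : linear (dotvl g).
Proof. by move=> a u v; rewrite /dotvl /dotv linearP /= mulmxDl -scalemxAl !mxE. Qed.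

HB.instance Definition _ g :=
  GRing.isLinear.Build R 'cV[R]_n R _ (dotvl g) (dotvl_linear g).

Lemma dotvlE g x : dotvl g x = \sum_k g k 0 * x k 0.
Proof. by rewrite /dotvl /dotv mxE; apply: eq_bigr => k _; rewrite mxE mulrC. Qed.

Lemma continuous_dotvl g : continuous (dotvl g).
Proof.
rewrite (_ : dotvl g = fun x => \sum_k g k 0 * x k 0); last exact/funext/dotvlE.
apply: continuous_big => [|k _ x]; first exact: add_continuous.
apply: (@continuous_comp _ _ _ (fun y : 'cV[R]_n => y k 0) ( *%R (g k 0))).
  exact: coord_continuous.
exact: mulrl_continuous.
Qed.

Lemma grad_dotvl g x : grad (dotvl g) x = g.
Proof.
rewrite /grad diff_lin; last exact: continuous_dotvl.
apply/colP => i; rewrite mxE; change (dotv (delta_mx i 0) g = g i 0).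
by rewrite /dotv trmx_delta -rowE mxE.
Qed.

Lemma grad_cst (c : R) x : grad (cst c) x = 0.
Proof. by apply/colP => i; rewrite !mxE diff_cst. Qed.

Lemma gradB f h x : differentiable f x -> differentiable h x ->
  grad (f - h) x = grad f x - grad h x.
Proof. by move=> df dh; apply/colP => i; rewrite !mxE diffB. Qed.

Lemma grad_bregman f x x' : differentiable f x ->
  grad (bregman f ^~ x') x = grad f x - grad f x'.
Proof.
move=> df; set g := grad f x'.
have -> : bregman f ^~ x' = (f - dotvl g) - cst (f x' - dotvl g x').
  apply/funext => y; rewrite /bregman !fctE -/(dotvl g (y - x')) linearB /=.
  by rewrite !opprB addrACA [RHS]addrACA [- dotvl g y + _]addrC.
have dL : differentiable (dotvl g) x.
  exact/linear_differentiable/continuous_dotvl.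
rewrite gradB; [|exact: differentiableB | exact: differentiable_cst].
by rewrite grad_cst subr0 (gradB df dL) grad_dotvl.
Qed.

Lemma grad_bregman_dual_shift f fs x u :
  (forall y, grad f (grad fs y) = y) -> differentiable f x ->
  grad (bregman f ^~ (grad fs (grad f x + u))) x = - u.
Proof. by move=> fK df; rewrite (grad_bregman _ df) fK opprD addNKr. Qed.

End Gradient.

Theorem mainTheorem10 (R : realType) (NX Ne : nat) (S : 'M[int]_(NX, Ne))
  (Phi Phis : 'cV[R]_NX -> R)
  (Psis Psi : 'cV[R]_NX -> 'cV[R]_Ne -> R)
  (j : 'cV[R]_NX -> 'cV[R]_Ne)
  (jdag : 'cV[R]_NX -> 'cV[R]_Ne)
  (ueq : 'cV[R]_NX -> 'cV[R]_NX)
  (I : set R) (xt : R -> 'cV[R]_NX) :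
  let SR : 'M[R]_(NX, Ne) := map_mx intr S in
  let X := @posOrth R NX in
  (* Phi primal thermodynamic, Phis its conjugate, gradients mutually inverse *)
  primal_thermo Phi ->
  is_conj_on Phi Phis ->
  (forall y, differentiable Phis y) ->
  (forall x, X x -> grad Phis (grad Phi x) = x) ->
  (forall y, X (grad Phis y) /\ grad Phi (grad Phis y) = y) ->
  (* dissipation functions Psis x, with conjugates Psi x *)
  (forall x, X x -> dissipation (Psis x)) ->
  (forall x, X x -> Psi x = LF_conj (Psis x)) ->
  (forall x, X x -> forall f, differentiable (Psi x) f) ->
  (forall x, X x -> forall f, grad (Psi x) (grad (Psis x) f) = f) ->
  (forall x, X x -> forall g, grad (Psis x) (grad (Psi x) g) = g) ->
  (* jdag x minimizes Psi x over {j' | -S j' = v(x)}, v(x) = -S j(x) *)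
  (forall x, X x ->
     - (SR *m jdag x) = - (SR *m j x) /\
     forall j', - (SR *m j') = - (SR *m j x) -> Psi x (jdag x) <= Psi x j') ->
  (* u_eq(x) : -S^T u_eq(x) = grad Psi_x (jdag x) *)
  (forall x, X x -> - (SR^T *m ueq x) = grad (Psi x) (jdag x)) ->
  let jeq := fun x => grad (Psis x) (- (SR^T *m ueq x)) in
  (* trajectory of xdot = -S j(x) on the time set I *)
  (forall t, I t -> X (xt t) /\ derivable xt t 1 /\
                    derive1 xt t = - (SR *m j (xt t))) ->
  let xtil := fun t => grad Phis (grad Phi (xt t) + ueq (xt t)) in
  let jeqt := fun t x =>
    grad (Psis x) (SR^T *m grad (fun y => bregman Phi y (xtil t)) x) in
  (forall x, X x -> - (SR *m jeq x) = - (SR *m j x)) /\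
  (forall t, I t -> derive1 xt t = - (SR *m jeqt t (xt t))).
Proof.
move=> SR X [_ dPhi _ _] _ _ _ PhisK _ _ _ _ PsisK jdagP ueqP jeq traj xtil jeqt.
have jeq_velocity x : X x -> - (SR *m jeq x) = - (SR *m j x).
  by move=> Xx; rewrite /jeq (ueqP _ Xx) (PsisK _ Xx); case: (jdagP x Xx).
split; first exact: jeq_velocity.
move=> t It; have [Xt [_ ->]] := traj t It.
have PhiK y : grad Phi (grad Phis y) = y by case: (PhisK y).
rewrite /jeqt /xtil (grad_bregman_dual_shift (ueq (xt t)) PhiK (dPhi _ Xt)).
by rewrite mulmxN; exact: esym (jeq_velocity _ Xt).
Qed.
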